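(* Let $G$ be a locally compact abelian group acting continuously on a compact metric space $(X,d)$. Then complete proximality $\sim_{cp}$ is an equivalence relation on $X$.
   Context: Let $\mathcal A$ be the collection of subsets $A\subset G$ which contain a translate of every compact subset of $G$. Points $x,y\in X$ are proximal in $A$ if $\inf_{t\in A}d(t\cdot x,t\cdot y)=0$, and completely proximal, $x\sim_{cp}y$, if they are proximal in every $A\in\mathcal A$. *)

From Stdlib Require Import Reals Lra List Relation_Definitions.
Open Scope R_scope.

Set Implicit Arguments.

Record topology (T : Type) := Topology {
  is_open : (T -> Prop) -> Prop;
  open_full : is_open (fun _ => True);
  open_inter : forall U V, is_open U -> is_open V ->
                 is_open (fun x => U x /\ V x);
  open_union : forall (I : Type) (F : I -> T -> Prop),
                 (forall i, is_open (F i)) -> is_open (fun x => exists i, F i x)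
}.

Definition compact_set {T : Type} (tT : topology T) (K : T -> Prop) : Prop :=
  forall (I : Type) (F : I -> T -> Prop),
    (forall i, is_open tT (F i)) ->
    (forall x, K x -> exists i, F i x) ->
    exists l : list I, forall x, K x -> exists i, In i l /\ F i x.

Definition hausdorff {T : Type} (tT : topology T) : Prop :=
  forall x y : T, x <> y -> exists U V, is_open tT U /\ is_open tT V /\
    U x /\ V y /\ (forall z, U z -> V z -> False).

Definition locally_compact {T : Type} (tT : topology T) : Prop :=
  forall x : T, exists U K, is_open tT U /\ U x /\ compact_set tT K /\
    (forall z, U z -> K z).

Definition prod_open {A B : Type} (tA : topology A) (tB : topology B)
  (W : A * B -> Prop) : Prop :=
  forall p, W p -> exists U V, is_open tA U /\ is_open tB V /\
    U (fst p) /\ V (snd p) /\ (forall a b, U a -> V b -> W (a, b)).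

Definition continuous {A B : Type} (tA : topology A) (tB : topology B)
  (f : A -> B) : Prop :=
  forall U, is_open tB U -> is_open tA (fun a => U (f a)).

Definition continuous2 {A B C : Type} (tA : topology A) (tB : topology B)
  (tC : topology C) (f : A -> B -> C) : Prop :=
  forall U, is_open tC U -> prod_open tA tB (fun p => U (f (fst p) (snd p))).

Definition is_LCA_group {G : Type} (tG : topology G)
  (mul : G -> G -> G) (inv : G -> G) (e : G) : Prop :=
  (forall a b c, mul a (mul b c) = mul (mul a b) c) /\
  (forall a, mul e a = a) /\
  (forall a, mul (inv a) a = e) /\
  (forall a b, mul a b = mul b a) /\
  continuous2 tG tG tG mul /\
  continuous tG tG inv /\
  hausdorff tG /\
  locally_compact tG.

Definition is_metric {X : Type} (d : X -> X -> R) : Prop :=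
  (forall x y, 0 <= d x y) /\
  (forall x y, d x y = 0 <-> x = y) /\
  (forall x y, d x y = d y x) /\
  (forall x y z, d x z <= d x y + d y z).

Definition metric_open {X : Type} (d : X -> X -> R) (U : X -> Prop) : Prop :=
  forall x, U x -> exists eps, 0 < eps /\ forall y, d x y < eps -> U y.

Lemma metric_open_full {X : Type} (d : X -> X -> R) :
  metric_open d (fun _ => True).
Proof. intros x _; exists 1; split; [lra | auto]. Qed.

Lemma metric_open_inter {X : Type} (d : X -> X -> R) U V :
  metric_open d U -> metric_open d V -> metric_open d (fun x => U x /\ V x).
Proof.
  intros HU HV x [Ux Vx].
  destruct (HU x Ux) as [e1 [He1 H1]]; destruct (HV x Vx) as [e2 [He2 H2]].
  exists (Rmin e1 e2); split; [apply Rmin_pos; auto|].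
  intros y Hy; split; [apply H1 | apply H2];
  eapply Rlt_le_trans; eauto; [apply Rmin_l | apply Rmin_r].
Qed.

Lemma metric_open_union {X : Type} (d : X -> X -> R) (I : Type)
  (F : I -> X -> Prop) :
  (forall i, metric_open d (F i)) -> metric_open d (fun x => exists i, F i x).
Proof.
  intros HF x [i Hi]; destruct (HF i x Hi) as [e [He H]].
  exists e; split; auto; intros y Hy; exists i; auto.
Qed.

Definition metric_topology {X : Type} (d : X -> X -> R) : topology X :=
  Topology (metric_open d) (metric_open_full d) (@metric_open_inter X d)
           (@metric_open_union X d).

Definition is_compact_metric_space {X : Type} (d : X -> X -> R) : Prop :=
  is_metric d /\ compact_set (metric_topology d) (fun _ => True).

Definition is_continuous_action {G X : Type} (tG : topology G)
  (mul : G -> G -> G) (e : G) (d : X -> X -> R) (act : G -> X -> X) : Prop :=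
  (forall x, act e x = x) /\
  (forall g h x, act (mul g h) x = act g (act h x)) /\
  continuous2 tG (metric_topology d) (metric_topology d) act.

Definition contains_translates {G : Type} (tG : topology G)
  (mul : G -> G -> G) (A : G -> Prop) : Prop :=
  forall K, compact_set tG K -> exists t, forall k, K k -> A (mul t k).

(** inf_{t in A} d(t.x, t.y) = 0 (d is nonnegative, so this says that
    d(t.x,t.y) gets arbitrarily small for t in A). *)
Definition proximal_in {G X : Type} (d : X -> X -> R) (act : G -> X -> X)
  (A : G -> Prop) (x y : X) : Prop :=
  forall eps, 0 < eps -> exists t, A t /\ d (act t x) (act t y) < eps.

Definition completely_proximal {G X : Type} (tG : topology G)
  (mul : G -> G -> G) (d : X -> X -> R) (act : G -> X -> X) (x y : X) : Prop :=
  forall A, contains_translates tG mul A -> proximal_in d act A x y.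

From Stdlib Require Import Reals Relation_Definitions Lra List.
Open Scope R_scope.

(* Reflexivity and symmetry are immediate (every A in the family contains a
   translate of {e}, so it is nonempty; d is symmetric).  The key observation is that if x ~cp y and A contains a translate
   of every compact set, then for each eps > 0 so does
       A_eps = {t in A | d(t.x, t.y) < eps}.
   Given a compact L, uniform equicontinuity of the action of L on the compact
   space X gives delta; the set S = {s | sL is contained in A} again contains
   translates of all compacts (since KL is compact), so some s in S has
   d(s.x, s.y) < delta, and by commutativity l.s.x = (sl).x for l in L, i.e.
   sL lies in A_eps.  Then x ~cp y ~cp z gives t in A_{eps/2} with
   d(t.y, t.z) < eps/2, and the triangle inequality concludes. *)

Fixpoint inter {A I : Type} (U : I -> A -> Prop) (l : list I) (x : A) : Prop :=
  match l with nil => True | j :: l' => U j x /\ inter U l' x end.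

Lemma inter_spec (A I : Type) (U : I -> A -> Prop) (l : list I) (x : A) :
  inter U l x <-> forall j, In j l -> U j x.
Proof.
  induction l as [|a l IH]; simpl; [firstorder|].
  rewrite IH. split.
  - intros [Ha Hl] j [<-|Hj]; auto.
  - intros H; split; auto.
Qed.

Lemma inter_open (A : Type) (tA : topology A) (I : Type) (U : I -> A -> Prop) :
  (forall i, is_open tA (U i)) -> forall l, is_open tA (fun x => inter U l x).
Proof.
  intros HU l; induction l as [|a l IH]; simpl.
  - exact (open_full tA).
  - exact (open_inter tA (U a) (fun x => inter U l x) (HU a) IH).
Qed.

Lemma compact_product_cover (A B : Type) (tA : topology A) (tB : topology B)
  (K : A -> Prop) (L : B -> Prop) (I : Type) (U : I -> A -> Prop)
  (V : I -> B -> Prop) :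
  compact_set tA K -> compact_set tB L ->
  (forall i, is_open tA (U i)) -> (forall i, is_open tB (V i)) ->
  (forall a b, K a -> L b -> exists i, U i a /\ V i b) ->
  exists l : list I,
    forall a b, K a -> L b -> exists i, In i l /\ U i a /\ V i b.
Proof.
  intros HK HL HU HV Hcover.
  (* A slice through a: a point a together with a finite list of rectangles
     whose U-sides contain a and whose V-sides cover L. *)
  pose (Slice := {a : A & {l : list {i : I | U i a} |
          forall b, L b -> exists j, In j l /\ V (proj1_sig j) b}}).
  pose (tube := fun (s : Slice) =>
          inter (fun j : {i : I | U i (projT1 s)} => U (proj1_sig j))
                (proj1_sig (projT2 s))).
  destruct (HK Slice tube) as [slices Hslices].
  - intro s. apply inter_open. intros; apply HU.
  - intros a Ka.
    destruct (HL {i : I | U i a} (fun j => V (proj1_sig j))) as [l Hl].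
    + intros; apply HV.
    + intros b Lb. destruct (Hcover a b Ka Lb) as [i [Ui Vi]].
      exists (exist _ i Ui). exact Vi.
    + exists (existT _ a (exist _ l Hl)).
      apply inter_spec. intros j _. exact (proj2_sig j).
  - exists (flat_map (fun s : Slice => map (@proj1_sig _ _) (proj1_sig (projT2 s)))
                     slices).
    intros a b Ka Lb. destruct (Hslices a Ka) as [s [Ins Htube]].
    destruct (proj2_sig (projT2 s) b Lb) as [j [Inj Vj]].
    exists (proj1_sig j). repeat split; auto.
    + apply in_flat_map. exists s. split; auto. apply in_map; auto.
    + exact (proj1 (inter_spec _ _ _ _ _) Htube j Inj).
Qed.

(* The image f(K x L) of a product of compacts under a jointly continuous map
   is compact; for a group this says that the product set KL is compact. *)
Lemma compact_image2 (A B C : Type) (tA : topology A) (tB : topology B)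
  (tC : topology C) (f : A -> B -> C) (K : A -> Prop) (L : B -> Prop) :
  continuous2 tA tB tC f -> compact_set tA K -> compact_set tB L ->
  compact_set tC (fun c => exists a b, K a /\ L b /\ c = f a b).
Proof.
  intros Hf HK HL I F HF Hcover.
  (* Open rectangles mapped by f into some member of the cover. *)
  pose (Rect := {p : (A -> Prop) * (B -> Prop) * I |
          is_open tA (fst (fst p)) /\ is_open tB (snd (fst p)) /\
          forall a b, fst (fst p) a -> snd (fst p) b -> F (snd p) (f a b)}).
  destruct (compact_product_cover _ _ tA tB K L _
              (fun r : Rect => fst (fst (proj1_sig r)))
              (fun r : Rect => snd (fst (proj1_sig r))) HK HL) as [rects Hrects].
  - intro r. exact (proj1 (proj2_sig r)).
  - intro r. exact (proj1 (proj2 (proj2_sig r))).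
  - intros a b Ka Lb.
    destruct (Hcover (f a b) (ex_intro _ a (ex_intro _ b (conj Ka (conj Lb eq_refl)))))
      as [i Hi].
    destruct (Hf (F i) (HF i) (a, b) Hi) as [U [V [HU [HV [Ua [Vb HUV]]]]]].
    exists (exist _ (U, V, i) (conj HU (conj HV HUV))). simpl. auto.
  - exists (map (fun r : Rect => snd (proj1_sig r)) rects).
    intros c [a [b [Ka [Lb ->]]]].
    destruct (Hrects a b Ka Lb) as [r [Inr [Ua Vb]]].
    exists (snd (proj1_sig r)). split.
    + apply (in_map (fun r : Rect => snd (proj1_sig r))); auto.
    + exact (proj2 (proj2 (proj2_sig r)) a b Ua Vb).
Qed.

Lemma singleton_compact (T : Type) (tT : topology T) (a : T) :
  compact_set tT (fun x => x = a).
Proof.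
  intros I F _ Hcover. destruct (Hcover a eq_refl) as [i Hi].
  exists (i :: nil). intros x ->. exists i. simpl; auto.
Qed.

Lemma dist_self (X : Type) (d : X -> X -> R) : is_metric d -> forall u, d u u = 0.
Proof. intros [_ [Hzero _]] u. apply Hzero; reflexivity. Qed.

Lemma ball_open (X : Type) (d : X -> X -> R) (Hd : is_metric d) (u : X) (r : R) :
  metric_open d (fun w => d u w < r).
Proof.
  destruct Hd as [_ [_ [_ Htri]]].
  intros w Hw. exists (r - d u w). split; [lra|].
  intros y Hy. pose proof (Htri u w y). lra.
Qed.

Fixpoint list_min {J : Type} (r : J -> R) (l : list J) : R :=
  match l with nil => 1 | j :: l' => Rmin (r j) (list_min r l') end.

Lemma list_min_pos (J : Type) (r : J -> R) (l : list J) :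
  (forall j, 0 < r j) -> 0 < list_min r l.
Proof. intros H; induction l; simpl; [lra|]. apply Rmin_pos; auto. Qed.

Lemma list_min_le (J : Type) (r : J -> R) (l : list J) :
  forall j, In j l -> list_min r l <= r j.
Proof.
  induction l as [|a l IH]; simpl; [tauto|].
  intros j [->|Hj]; [apply Rmin_l|].
  eapply Rle_trans; [apply Rmin_r | auto].
Qed.

Section Equicontinuity.

Variables (A X : Type) (tA : topology A) (d : X -> X -> R).
Hypothesis HX : is_compact_metric_space d.
Variable act : A -> X -> X.
Hypothesis Hact : continuous2 tA (metric_topology d) (metric_topology d) act.

Lemma continuous2_at (a0 : A) (u : X) (eps : R) : 0 < eps ->
  exists U r, is_open tA U /\ U a0 /\ 0 < r /\
    forall a w, U a -> d u w < r -> d (act a0 u) (act a w) < eps.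
Proof.
  intros Heps. destruct HX as [Hd _].
  destruct (Hact (fun z => d (act a0 u) z < eps) (ball_open _ _ Hd _ _) (a0, u))
    as [U [V [HU [HV [Ua0 [Vu HUV]]]]]].
  { simpl. rewrite dist_self by exact Hd. exact Heps. }
  destruct (HV u Vu) as [r [Hr HrV]].
  exists U, r. repeat split; auto.
  intros a w Ua Hw. exact (HUV a w Ua (HrV w Hw)).
Qed.

Record local_modulus (eps : R) := {
  lm_set : A -> Prop;
  lm_base : A;
  lm_center : X;
  lm_radius : R;
  lm_open : is_open tA lm_set;
  lm_radius_pos : 0 < lm_radius;
  lm_close : forall a w, lm_set a -> d lm_center w < lm_radius ->
    d (act lm_base lm_center) (act a w) < eps / 2 }.
Arguments lm_set {eps}.
Arguments lm_base {eps}.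
Arguments lm_center {eps}.
Arguments lm_radius {eps}.
Arguments lm_radius_pos {eps}.
Arguments lm_close {eps}.

Lemma uniform_equicontinuity (L : A -> Prop) (HL : compact_set tA L)
  (eps : R) (Heps : 0 < eps) :
  exists delta, 0 < delta /\
    forall l u v, L l -> d u v < delta -> d (act l u) (act l v) < eps.
Proof.
  pose proof HX as [Hd HXc].
  pose proof Hd as [_ [_ [Hsym Htri]]].
  destruct (compact_product_cover _ _ tA (metric_topology d) L (fun _ => True) _
              (@lm_set eps)
              (fun m => fun w => d (lm_center m) w < lm_radius m / 2) HL HXc)
    as [moduli Hmoduli].
  - intro m. apply lm_open.
  - intro m. apply ball_open; exact Hd.
  - intros l u _ _.
    destruct (continuous2_at l u (eps / 2) ltac:(lra))
      as [U [r [HU [Ul [Hr Hclose]]]]].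
    exists (Build_local_modulus eps U l u r HU Hr Hclose). simpl.
    rewrite dist_self by exact Hd. split; [exact Ul | lra].
  - exists (list_min (fun m => lm_radius m / 2) moduli). split.
    + apply list_min_pos. intro m. pose proof (lm_radius_pos m). lra.
    + intros l u v Ll Huv.
      destruct (Hmoduli l u Ll I) as [m [Inm [Ul Hu]]].
      pose proof (list_min_le _ (fun m => lm_radius m / 2) moduli m Inm) as Hmin.
      simpl in Hmin, Hu.
      pose proof (lm_radius_pos m).
      pose proof (Htri (lm_center m) u v).
      pose proof (lm_close m l u Ul ltac:(lra)) as Hclose_u.
      pose proof (lm_close m l v Ul ltac:(lra)) as Hclose_v.
      pose proof (Htri (act l u) (act (lm_base m) (lm_center m)) (act l v)).
      rewrite (Hsym (act l u) (act (lm_base m) (lm_center m))) in *. lra.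
Qed.

End Equicontinuity.

Section CompleteProximality.

Variables (G : Type) (tG : topology G) (mul : G -> G -> G).
Hypothesis mul_assoc : forall a b c, mul a (mul b c) = mul (mul a b) c.
Hypothesis mul_comm : forall a b, mul a b = mul b a.
Hypothesis mul_cont : continuous2 tG tG tG mul.

Variables (X : Type) (d : X -> X -> R).
Hypothesis HX : is_compact_metric_space d.
Variable act : G -> X -> X.
Hypothesis act_mul : forall g h x, act (mul g h) x = act g (act h x).
Hypothesis act_cont : continuous2 tG (metric_topology d) (metric_topology d) act.

(* If A contains a translate of every compact set, then so does the set of
   all s with sL contained in A, for any compact L (because KL is compact). *)
Lemma translates_of_compact_fit (A : G -> Prop) (L : G -> Prop) :
  contains_translates tG mul A -> compact_set tG L ->
  contains_translates tG mul (fun s => forall l, L l -> A (mul s l)).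
Proof.
  intros HA HL K HK.
  destruct (HA _ (compact_image2 _ _ _ tG tG tG mul K L mul_cont HK HL)) as [t Ht].
  exists t. intros k Kk l Ll. rewrite <- mul_assoc. apply Ht.
  exists k, l. auto.
Qed.

Lemma cp_refines_family (x y : X) (A : G -> Prop) (eps : R) :
  completely_proximal tG mul d act x y -> contains_translates tG mul A ->
  0 < eps ->
  contains_translates tG mul (fun t => A t /\ d (act t x) (act t y) < eps).
Proof.
  intros Hxy HA Heps L HL.
  destruct (uniform_equicontinuity _ _ tG d HX act act_cont L HL eps Heps)
    as [delta [Hdelta Hequi]].
  destruct (Hxy _ (translates_of_compact_fit A L HA HL) delta Hdelta)
    as [s [HsL Hs]].
  exists s. intros l Ll. split; [auto|].
  rewrite mul_comm, !act_mul. apply Hequi; auto.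
Qed.

(* Reflexivity only uses that G is inhabited (e.g. by its unit). *)
Lemma cp_refl (g : G) : reflexive X (completely_proximal tG mul d act).
Proof.
  intros x A HA eps Heps.
  destruct (HA _ (singleton_compact _ tG g)) as [t Ht].
  exists (mul t g). split; auto.
  rewrite dist_self by exact (proj1 HX). exact Heps.
Qed.

Lemma cp_sym : symmetric X (completely_proximal tG mul d act).
Proof.
  intros x y Hxy A HA eps Heps.
  destruct (Hxy A HA eps Heps) as [t [At Ht]].
  exists t. destruct HX as [[_ [_ [Hsym _]]] _]. rewrite Hsym. auto.
Qed.

Lemma cp_trans : transitive X (completely_proximal tG mul d act).
Proof.
  intros x y z Hxy Hyz A HA eps Heps.
  destruct (Hyz _ (cp_refines_family x y A (eps / 2) Hxy HA ltac:(lra))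
                (eps / 2) ltac:(lra)) as [t [[At Hxy_t] Hyz_t]].
  exists t. split; auto.
  destruct HX as [[_ [_ [_ Htri]]] _].
  pose proof (Htri (act t x) (act t y) (act t z)). lra.
Qed.

End CompleteProximality.

Arguments cp_refl {G} tG mul {X} d HX act g.
Arguments cp_sym {G} tG mul {X} d HX act.
Arguments cp_trans {G} tG {mul} mul_assoc mul_comm mul_cont {X} d HX {act} act_mul act_cont.

Theorem mainTheorem17
  (G : Type) (tG : topology G) (mul : G -> G -> G) (inv : G -> G) (e : G)
  (HG : is_LCA_group tG mul inv e)
  (X : Type) (d : X -> X -> R) (HX : is_compact_metric_space d)
  (act : G -> X -> X) (Hact : is_continuous_action tG mul e d act) :
  equivalence X (completely_proximal tG mul d act).
Proof.
  destruct HG as [mul_assoc [_ [_ [mul_comm [mul_cont _]]]]].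
  destruct Hact as [_ [act_mul act_cont]].
  constructor.
  - exact (cp_refl tG mul d HX act e).
  - exact (cp_trans tG mul_assoc mul_comm mul_cont d HX act_mul act_cont).
  - exact (cp_sym tG mul d HX act).
Qed.
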